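(* Let $q$ be a prime power and $n\ge1$ with $q^n>2$. Let $\beta,\gamma\in\mathbb{F}_q$ with $\beta\neq-\gamma$, and let $f(x)\neq x-1$ be a primitive polynomial of degree $n$ over $\mathbb{F}_q$. Set $h(x)=f\big((\beta+\gamma)x+1\big)$ and $h^*(x)=x^n h(1/x)$. Then the polynomial $$F(x)=\frac{(x-\gamma)^n\, f\!\left(\dfrac{x^{q^n}+\beta}{x-\gamma}\right)}{h^*(x-\gamma)}$$ is an irreducible polynomial of degree $n(q^n-1)$ over $\mathbb{F}_q$.
   Context: A primitive polynomial of degree $n$ over $\mathbb{F}_q$ is a monic irreducible polynomial of degree $n$ whose roots generate the multiplicative group $\mathbb{F}_{q^n}^*$. *)

From HB Require Import structures.
From mathcomp Require Import all_boot all_order all_algebra all_field.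
From mathcomp Require Import qfpoly.
Set Implicit Arguments. Unset Strict Implicit. Unset Printing Implicit Defensive.
Import GRing.Theory.
Local Open Scope ring_scope.

(* "primitive polynomial": we use MathComp's own notion
   qfpoly.primitive_poly (monic, irreducible, and X has multiplicative order
   exactly q^n - 1 = #|F[X]/(p)| - 1 modulo p, i.e. the root X generates the
   multiplicative group of F[X]/(p) = F_{q^n}). The degree is fixed separately. *)

(* reciprocal polynomial of degree n: p^*(x) = x^n p(1/x) *)
Definition recip (F : fieldType) (n : nat) (p : {poly F}) : {poly F} :=
  \sum_(i < n.+1) p`_i *: 'X^(n - i).

Definition hpoly (F : fieldType) (beta gamma : F) (f : {poly F}) : {poly F} :=
  f \Po ((beta + gamma) *: 'X + 1).

(* numerator (x - gamma)^n f((x^Q + beta)/(x - gamma)), with Q = q^n,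
   written as the polynomial sum_i f_i (x^Q + beta)^i (x - gamma)^(n-i) *)
Definition Fnum (F : fieldType) (n Q : nat) (beta gamma : F) (f : {poly F})
  : {poly F} :=
  \sum_(i < n.+1) f`_i *: (('X^Q + beta%:P) ^+ i * ('X - gamma%:P) ^+ (n - i)).

Definition Fden (F : fieldType) (n : nat) (beta gamma : F) (f : {poly F})
  : {poly F} :=
  recip n (hpoly beta gamma f) \Po ('X - gamma%:P).

(* Let g be a monic irreducible factor of G := Fnum / Fden and w the class of X
   in the field K := F[X]/(g), of order q^d with d := deg g.  Since Fnum(w) = 0,
   y := (w^Q + beta) / (w - gamma) is a root of f, hence a generator of the
   multiplicative group of F_Q, and K contains F_Q, so n divides d.  Let x in F_Q
   solve (x + beta) / (x - gamma) = y; then z := w - x satisfies z^Q = y z, hence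
   z^(q^d) = y^(d/n) z.  Now z <> 0: otherwise w^Q = w, so g divides X^Q - X, which
   divides Fnum - Fden, and g^2 would divide Fnum, while the Euler identity for the
   homogenized polynomial Fnum shows that Fnum' does not vanish at w.  As z^(q^d) = z,
   y^(d/n) = 1, so Q - 1 divides d/n and deg g >= n (Q - 1) = deg G.  The same
   computation with w + beta in place of w^Q + beta shows that every root of Fden lies
   in F_Q, whence Fden divides X^Q - X and thus Fnum. *)

From HB Require Import structures.
From mathcomp Require Import all_boot all_order all_algebra all_field.
From mathcomp Require Import qfpoly ring zify.
From Stdlib Require Import Classical.
From Pilot Require Import Defs.
Set Implicit Arguments. Unset Strict Implicit. Unset Printing Implicit Defensive.
Import GRing.Theory.
Local Open Scope ring_scope.

Section FiniteFieldPowers.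
Variable F : finFieldType.
Local Notation q := #|F|.

Lemma pnat_pchar_card : [pchar F].-nat q.
Proof.
have [p _ pF] := finPcharP F.
rewrite (eq_pnat _ (pcharf_eq pF)) -cardsT.
exact: abelian.abelem_pgroup (abelian.fin_ring_pchar_abelem pF).
Qed.

Lemma pnat_pchar_cardX (R : nzRingType) (iota : {rmorphism F -> R}) k :
  [pchar R].-nat (q ^ k)%N.
Proof.
rewrite pnatX; apply/orP; left.
by apply: sub_in_pnat pnat_pchar_card => p _; apply: rmorph_pchar.
Qed.

Lemma natr_card_eq0 : q%:R = 0 :> F.
Proof.
have [p _ pF] := finPcharP F.
have /p_natP[[|e] q_pe] : p.-nat q by rewrite -(eq_pnat _ (pcharf_eq pF)) pnat_pchar_card.
  by have := finNzRing_gt1 F; rewrite q_pe.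
by rewrite q_pe natrX pcharf0 // expr0n.
Qed.

Lemma deriv_XcardX k : (0 < k)%N -> ('X^(q ^ k))^`() = 0 :> {poly F}.
Proof.
move=> k_gt0; rewrite derivXn -mulr_natr -polyC_natr natrX natr_card_eq0.
by rewrite expr0n -[k]prednK // mulr0.
Qed.

Lemma expf_cardX k (c : F) : c ^+ (q ^ k) = c.
Proof. by elim: k => [|k IHk]; rewrite ?expr1 // expnSr exprM IHk expf_card. Qed.

Lemma rmorph_expf_cardX (R : nzRingType) (iota : {rmorphism F -> R}) k c :
  iota c ^+ (q ^ k) = iota c.
Proof. by rewrite -rmorphXn expf_cardX. Qed.

End FiniteFieldPowers.

Lemma exprBn_pchar (R : comNzRingType) (x y : R) N :
  [pchar R].-nat N -> (x - y) ^+ N = x ^+ N - y ^+ N.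
Proof. by move=> pN; rewrite exprDn_pchar // exprNn_pchar. Qed.

Lemma expr_expn_eigen (R : comNzRingType) (y z : R) N k :
  y ^+ N = y -> z ^+ N = y * z -> z ^+ (N ^ k) = y ^+ k * z.
Proof.
move=> yN zN; elim: k => [|k IHk]; first by rewrite expr1 mul1r.
by rewrite expnSr exprM IHk exprMn zN -exprM mulnC exprM yN mulrA -exprSr.
Qed.

Lemma irredp_dvdp_map_root (F K : fieldType) (iota : {rmorphism F -> K})
    (f P : {poly F}) u :
  irreducible_poly f -> root (map_poly iota f) u -> root (map_poly iota P) u ->
  f %| P.
Proof.
move=> f_irr fu Pu; apply: contraT; rewrite -irreducible_poly_coprime //.
case/Bezout_coprimepP => [[a b] /= abE].
have /size_poly1P [c c_neq0 cE] : size (a * f + b * P) == 1%N.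
  by rewrite (eqp_size abE) size_poly1.
have := congr1 (fun p => (map_poly iota p).[u]) cE.
rewrite /= rmorphD !rmorphM hornerD !hornerM (rootP fu) (rootP Pu) !mulr0 addr0.
by rewrite map_polyC hornerC => /esym/eqP; rewrite fmorph_eq0 (negPf c_neq0).
Qed.

Lemma eqp_irredp (F : fieldType) (p r : {poly F}) :
  p %= r -> irreducible_poly p -> irreducible_poly r.
Proof.
move=> p_eqp_r [sp p_irr]; split=> [|s s1 sr]; first by rewrite -(eqp_size p_eqp_r).
have sp_dvd : s %| p by rewrite (eqp_dvdr _ p_eqp_r).
exact: eqp_trans (p_irr _ s1 sp_dvd) p_eqp_r.
Qed.

Lemma exists_monic_irredp_dvdp (F : fieldType) (p : {poly F}) :
  (1 < size p)%N -> exists2 g, monic_irreducible_poly g & g %| p.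
Proof.
elim: {p}(size p) {-2}p (leqnn (size p)) => [|m IHm] p sp p_gt1.
  by have := leq_trans p_gt1 sp.
have p_neq0 : p != 0 by rewrite -size_poly_gt0 ltnW.
have [p_irr|p_red] := classic (irreducible_poly p).
  have lp_neq0 : (lead_coef p)^-1 != 0 by rewrite invr_eq0 lead_coef_eq0.
  exists ((lead_coef p)^-1 *: p); last by rewrite dvdpZl.
  split; last by rewrite monicE lead_coefZ mulVf ?lead_coef_eq0.
  by apply: eqp_irredp p_irr; rewrite eqp_sym eqp_scale.
have [s [s1 s_dvd s_neqp]] : exists s : {poly F}, [/\ size s != 1%N, s %| p & ~~ (s %= p)].
  apply: NNPP => no_s; apply: p_red; split=> // s s1 s_dvd.
  by apply: contraT => s_neqp; exfalso; apply: no_s; exists s.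
have s_neq0 : s != 0 by apply: contraNneq p_neq0 => s0; rewrite -dvd0p -s0.
have s_lt : (size s < size p)%N.
  by rewrite ltn_neqAle (dvdp_leq p_neq0 s_dvd) andbT dvdp_size_eqp.
have [||g g_irr g_dvd] := IHm s; first by rewrite -ltnS (leq_trans s_lt).
  by rewrite ltn_neqAle eq_sym s1 size_poly_gt0.
by exists g => //; apply: dvdp_trans s_dvd.
Qed.

Lemma irredp_factor_size (F : fieldType) (p : {poly F}) : (1 < size p)%N ->
  (forall g, monic_irreducible_poly g -> g %| p -> (size p <= size g)%N) ->
  irreducible_poly p.
Proof.
move=> p_gt1 p_factors; split=> // r r1 r_dvd.
have p_neq0 : p != 0 by rewrite -size_poly_gt0 ltnW.
have r_neq0 : r != 0 by apply: contraNneq p_neq0 => r0; rewrite -dvd0p -r0.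
have [|g g_irr g_dvd] := exists_monic_irredp_dvdp (p := r).
  by rewrite ltn_neqAle eq_sym r1 size_poly_gt0.
rewrite -dvdp_size_eqp // eqn_leq (dvdp_leq p_neq0 r_dvd).
exact: leq_trans (p_factors g g_irr (dvdp_trans g_dvd r_dvd)) (dvdp_leq r_neq0 g_dvd).
Qed.

Lemma sqr_dvdp_deriv (F : fieldType) (g p : {poly F}) : g * g %| p -> g %| p^`().
Proof.
case/dvdpP => r ->; rewrite !derivM.
apply: dvdp_add; first exact/dvdp_mull/dvdp_mulIr.
by apply/dvdp_mull/dvdp_add; [apply: dvdp_mulIr | apply: dvdp_mulIl].
Qed.

(** * Moebius inversion *)

(* The solution x of (x + b) / (x - c) = y. *)
Definition mobius_inv (K : fieldType) (b c y : K) := (b + c * y) / (y - 1).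

Lemma mobius_invE (K : fieldType) (b c y : K) :
  y != 1 -> mobius_inv b c y + b = y * (mobius_inv b c y - c).
Proof.
move=> y_neq1; set x := mobius_inv b c y.
have xE : x * (y - 1) = b + c * y by rewrite divfK // subr_eq0.
apply/eqP; rewrite -subr_eq0.
have -> : x + b - y * (x - c) = b + c * y - x * (y - 1) by ring.
by rewrite xE subrr.
Qed.

Lemma mobius_inv_eigen (K : fieldType) (b c y v v' : K) : y != 1 ->
  v' + b = y * (v - c) -> v' - mobius_inv b c y = y * (v - mobius_inv b c y).
Proof.
move=> y_neq1 vE; have := mobius_invE b c y_neq1; set x := mobius_inv b c y => xE.
apply/eqP; rewrite -subr_eq0.
have -> : v' - x - y * (v - x) = v' + b - y * (v - c) - (x + b - y * (x - c)) by ring.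
by rewrite vE xE !subrr.
Qed.

Lemma mobius_inv_unique (K : fieldType) (b c y v : K) :
  y != 1 -> v + b = y * (v - c) -> v = mobius_inv b c y.
Proof.
move=> y_neq1 /(mobius_inv_eigen y_neq1) /eqP; rewrite -{1}[v - _]mul1r -subr_eq0 -mulrBl.
by rewrite mulf_eq0 subr_eq0 eq_sym (negPf y_neq1) subr_eq0 => /eqP.
Qed.

Lemma mobius_inv_fixed (K : fieldType) (b c y : K) N : [pchar K].-nat N ->
  b ^+ N = b -> c ^+ N = c -> y ^+ N = y -> mobius_inv b c y ^+ N = mobius_inv b c y.
Proof.
move=> pN bN cN yN.
by rewrite exprMn exprVn exprDn_pchar // exprBn_pchar // exprMn bN cN yN expr1n.
Qed.

(** * Roots of primitive polynomials *)

Section PrimitiveRoot.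
Variables (F : finFieldType) (K : fieldType) (iota : {rmorphism F -> K}).
Variables (n : nat) (f : {poly F}) (u : K).
Hypotheses (sf : size f = n.+1) (pf : primitive_poly f).
Hypothesis fu : root (map_poly iota f) u.
Local Notation Q := (#|F| ^ n)%N.

Let f_irr : irreducible_poly f. Proof. by case: (primitive_mi pf). Qed.

Let n_gt0 : (0 < n)%N.
Proof. by case: f_irr; rewrite sf ltnS. Qed.

Let Q_gt1 : (1 < Q)%N.
Proof. by rewrite -[1%N](exp1n n) ltn_exp2r ?finNzRing_gt1. Qed.

Let root_XnsubC1 m : root (map_poly iota ('X^m - 1)) u = (u ^+ m == 1).
Proof. by rewrite rmorphB /= map_polyXn rmorph1 rootE !hornerE subr_eq0. Qed.

Lemma primitive_poly_prim_root : (Q - 1).-primitive_root u.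
Proof.
have /primitive_polyP[[_ f_monic] f_dvd f_ndvd] := pf.
rewrite card_monic_qpoly ?sf ?ltnS //= in f_dvd f_ndvd.
have Q1_gt0 : (0 < Q.-1)%N by rewrite -ltnS prednK // ltnW.
have uQ : u ^+ Q.-1 = 1.
  apply/eqP; rewrite -root_XnsubC1; have /dvdpP[r ->] := f_dvd.
  by rewrite rmorphM rootM fu orbT.
have [m prim_m m_dvd] := prim_order_exists Q1_gt0 uQ.
rewrite subn1; suff <- : m = Q.-1 by [].
apply/eqP; rewrite eqn_leq (dvdn_leq Q1_gt0 m_dvd) leqNgt; apply/negP => m_lt.
have /negP[] : ~~ (f %| 'X^m - 1) by apply: f_ndvd; rewrite (prim_order_gt0 prim_m).
apply: (irredp_dvdp_map_root f_irr fu).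
by rewrite root_XnsubC1 prim_expr_order.
Qed.

Lemma primitive_poly_root_neq0 : u != 0.
Proof. by rewrite (prim_root_eq0 primitive_poly_prim_root) subn_eq0 -ltnNge. Qed.

Lemma primitive_poly_root_fixed : u ^+ Q = u.
Proof.
by rewrite -[Q]prednK ?(ltnW Q_gt1) // exprS -subn1
  (prim_expr_order primitive_poly_prim_root) mulr1.
Qed.

Lemma primitive_poly_deriv_root_neq0 : (map_poly iota f)^`().[u] != 0.
Proof.
have : f %| 'X^Q - 'X.
  apply: (irredp_dvdp_map_root f_irr fu).
  by rewrite rmorphB /= map_polyXn map_polyX rootE !hornerE primitive_poly_root_fixed subrr.
rewrite deriv_map; case/dvdpP => r /(congr1 (fun p => (map_poly iota p^`()).[u])).
rewrite derivB deriv_XcardX // derivX sub0r derivM rmorphD !rmorphM /= hornerD !hornerM.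
rewrite (rootP fu) mulr0 add0r rmorphN rmorph1 hornerN hornerC => /eqP.
by apply: contraTneq => ->; rewrite mulr0 oppr_eq0 oner_eq0.
Qed.

Lemma primitive_poly_root_neq1 : (2 < Q)%N -> u != 1.
Proof.
move=> Q_gt2; apply: contraTneq Q_gt2 => u1.
have := prim_order_dvd primitive_poly_prim_root 1; rewrite u1 expr1 eqxx.
by move/dvdn_leq; lia.
Qed.
End PrimitiveRoot.

Lemma primitive_poly_horner1_neq0 (F : finFieldType) n (f : {poly F}) :
  size f = n.+1 -> primitive_poly f -> (2 < #|F| ^ n)%N -> f.[1] != 0.
Proof.
move=> sf pf Q_gt2; apply/negP => /eqP f1.
have f_root1 : root (map_poly (idfun : {rmorphism F -> F}) f) 1.
  by rewrite map_poly_id // rootE f1.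
by have := primitive_poly_root_neq1 sf pf f_root1 Q_gt2; rewrite eqxx.
Qed.

Lemma primitive_poly_dvdn_degree (F K : finFieldType) (iota : {rmorphism F -> K})
    n (f : {poly F}) (u : K) d :
  size f = n.+1 -> primitive_poly f -> root (map_poly iota f) u ->
  #|K| = (#|F| ^ d)%N -> (n %| d)%N.
Proof.
move=> sf pf fu cardK; set q := #|F|; set r := (d %% n)%N.
have u_prim := primitive_poly_prim_root sf pf fu.
have u_neq0 := primitive_poly_root_neq0 sf pf fu.
have q_gt1 : (1 < q)%N := finNzRing_gt1 F.
have uQm : u ^+ ((q ^ n) ^ (d %/ n)) = u.
  by rewrite (@expr_expn_eigen _ 1) ?expr1n ?mul1r // (primitive_poly_root_fixed sf pf fu).
have uqr : u ^+ (q ^ r) = u.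
  rewrite -[RHS](expf_card u) cardK (divn_eq d n) expnD exprM.
  by rewrite [(_ %/ _ * _)%N]mulnC expnM uQm.
have : (q ^ n - 1 %| q ^ r - 1)%N.
  rewrite (prim_order_dvd u_prim); apply/eqP/(mulIf u_neq0).
  by rewrite mul1r -exprSr subn1 prednK ?expn_gt0 ?(ltnW q_gt1).
have [|r_gt0] := posnP r; first by move/eqP; rewrite /dvdn.
have n_gt0 : (0 < n)%N.
  by case: (posnP n) (prim_order_gt0 u_prim) => [->|//]; rewrite expn0 subnn.
move/dvdn_leq; rewrite subn_gt0 -{1}[1%N](expn0 q) ltn_exp2l // => /(_ r_gt0).
by rewrite leq_sub2rE ?expn_gt0 ?(ltnW q_gt1) // leq_exp2l // leqNgt ltn_pmod.
Qed.

(** * Homogenized polynomials *)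

Lemma horner_homog (K : fieldType) (p : {poly K}) n a c :
  (size p <= n.+1)%N -> c != 0 ->
  \sum_(i < n.+1) p`_i * a ^+ i * c ^+ (n - i) = c ^+ n * p.[a / c].
Proof.
move=> sp c_neq0; rewrite (horner_coef_wide _ sp) mulr_sumr; apply: eq_bigr => i _.
have -> : c ^+ n = c ^+ (n - i) * c ^+ i by rewrite -exprD subnK // -ltnS.
by rewrite exprMn exprVn; field; rewrite expf_neq0.
Qed.

Lemma horner_deriv_mulX (K : fieldType) (p : {poly K}) n y :
  (size p <= n.+1)%N -> \sum_(i < n.+1) p`_i * y ^+ i *+ i = y * p^`().[y].
Proof.
move=> sp; have sp' : (size p^`() <= n)%N.
  have [->|p_neq0] := eqVneq p 0; first by rewrite deriv0 size_poly0.
  by rewrite -ltnS (leq_trans (lt_size_deriv p_neq0) sp).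
rewrite (horner_coef_wide _ sp') big_ord_recl /= mulr0n add0r mulr_sumr.
by apply: eq_bigr => i _; rewrite coef_deriv /bump /= add1n -mulrnAl exprS mulrCA.
Qed.

(* [homog n f P C] is the polynomial C^n f(P/C). *)
Definition homog (R : nzRingType) n (f P C : {poly R}) : {poly R} :=
  \sum_(i < n.+1) f`_i *: (P ^+ i * C ^+ (n - i)).

Section RmorphPoly.
Variables (F K : fieldType) (psi : {rmorphism {poly F} -> K}).
Local Notation iota := (psi \o polyC).

Lemma rmorph_scale_poly c p : psi (c *: p) = iota c * psi p.
Proof. by rewrite -mul_polyC rmorphM. Qed.

Lemma rmorph_comp_poly P R : psi (P \Po R) = (map_poly iota P).[psi R].
Proof.
rewrite comp_polyE rmorph_sum (horner_coef_wide _ (_ : size _ <= size P)%N).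
  by apply: eq_bigr => i _; rewrite rmorph_scale_poly rmorphXn coef_map.
by rewrite size_map_poly.
Qed.

Lemma rmorph_homog n (f P C : {poly F}) : (size f <= n.+1)%N -> psi C != 0 ->
  psi (homog n f P C) = psi C ^+ n * (map_poly iota f).[psi P / psi C].
Proof.
move=> sf C_neq0; rewrite -horner_homog ?size_map_poly // rmorph_sum.
by apply: eq_bigr => i _; rewrite rmorph_scale_poly rmorphM !rmorphXn coef_map mulrA.
Qed.

Lemma rmorph_homog_eq0 n (f P C : {poly F}) : psi C = 0 ->
  psi (homog n f P C) = iota f`_n * psi P ^+ n.
Proof.
move=> C0; rewrite rmorph_sum big_ord_recr /= big1 ?add0r => [|i _].
  by rewrite rmorph_scale_poly subnn mulr1 rmorphXn.
by rewrite rmorph_scale_poly rmorphM !rmorphXn C0 expr0n subn_eq0 leqNgt ltn_ord !mulr0.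
Qed.

Lemma rmorph_deriv_homog n (f P C : {poly F}) : (size f <= n.+1)%N -> psi C != 0 ->
  P^`() = 0 -> C^`() = 1 ->
  let y := psi P / psi C in
  psi C * psi (homog n f P C)^`() =
    psi C ^+ n * ((map_poly iota f).[y] *+ n - y * (map_poly iota f)^`().[y]).
Proof.
move=> sf C_neq0 dP dC y; set c := psi C; set p := map_poly iota f.
have sp : (size p <= n.+1)%N by rewrite size_map_poly.
have -> : p.[y] *+ n - y * p^`().[y] = \sum_(i < n.+1) p`_i * y ^+ i *+ (n - i).
  rewrite (horner_coef_wide _ sp) -(horner_deriv_mulX _ sp) -sumrMnl -sumrB.
  by apply: eq_bigr => i _; rewrite mulrnBr // -ltnS.
rewrite raddf_sum rmorph_sum !mulr_sumr; apply: eq_bigr => i _.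
rewrite /= derivZ derivM !deriv_exp dP dC !mul0r mul0rn mul0r add0r mul1r.
rewrite rmorph_scale_poly rmorphM rmorphMn !rmorphXn coef_map -/c /=.
have -> : psi P = y * c by rewrite divfK.
have [ni0|ni_gt0] := posnP (n - i)%N; first by rewrite ni0 !mulr0n !mulr0.
have -> : c ^+ n = c * c ^+ (n - i).-1 * c ^+ i.
  by rewrite -exprS prednK // -exprD subnK // -ltnS.
by rewrite !mulrnAr exprMn; congr (_ *+ _); ring.
Qed.
End RmorphPoly.

(* Compare both sides in the fraction field, where h^*(c) = c^n h(1/c). *)
Lemma Fden_homog (F : fieldType) n (beta gamma : F) (f : {poly F}) :
  (size f <= n.+1)%N ->
  Fden n beta gamma f = homog n f ('X + beta%:P) ('X - gamma%:P).
Proof.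
move=> sf; pose psi : {rmorphism {poly F} -> {fraction {poly F}}} := @tofrac _.
pose iota := psi \o polyC; pose c := psi ('X - gamma%:P).
have c_neq0 : c != 0 by rewrite tofrac_eq0 polyXsubC_eq0.
apply/eqP; rewrite -(tofrac_eq (R := {poly F})) -/(psi _) -/(psi _) rmorph_homog //.
rewrite -/c /Fden rmorph_comp_poly -/c /recip rmorph_sum horner_sum.
set h := map_poly iota (hpoly beta gamma f).
have sh : (size h <= n.+1)%N.
  rewrite size_map_poly (leq_trans (size_comp_poly_leq _ _)) // ltnS.
  rewrite -[n]muln1 leq_mul // -?subn1 ?leq_subLR ?add1n //.
  rewrite (leq_trans (size_polyD _ _)) // geq_max size_polyC.
  by rewrite (leq_trans (size_scale_leq _ _)) ?size_polyX ?(leq_trans (leq_b1 _)).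
rewrite (eq_bigr (fun i : 'I_n.+1 => h`_i * 1 ^+ i * c ^+ (n - i))) => [|i _]; last first.
  by rewrite /= map_polyZ map_polyXn hornerZ hornerXn coef_map expr1n mulr1.
rewrite horner_homog // /h /hpoly map_comp_poly horner_comp.
apply/eqP; congr (_ * _); congr (_.[_]).
rewrite rmorphD /= map_polyZ map_polyX rmorph1 !hornerE.
have -> : psi ('X + beta%:P) = c + iota (beta + gamma).
  by rewrite /c -rmorphD polyCD addrA addrAC subrK.
by rewrite /= mulr1 mulrDl divff // addrC.
Qed.

Lemma size_homog_XsubC (R : idomainType) n (f : {poly R}) a c :
  (size f <= n.+1)%N -> f.[1] != 0 ->
  size (homog n f ('X - a%:P) ('X - c%:P)) = n.+1.
Proof.
move=> sf f1_neq0; set T := fun i : 'I_n.+1 => ('X - a%:P) ^+ i * ('X - c%:P) ^+ (n - i).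
have T_monic i : T i \is monic by rewrite monicMl ?monic_exp ?monicXsubC.
have size_T i : size (T i) = n.+1.
  rewrite size_monicM ?monic_exp ?monicXsubC -?size_poly_eq0 ?size_exp_XsubC //.
  by rewrite addSn addnS /= subnKC // -ltnS.
apply/anti_leq/andP; split.
  apply: leq_trans (size_sum _ _ _) _; apply/bigmax_leqP => i _.
  by apply: leq_trans (size_scale_leq _ _) _; rewrite size_T.
have coef_n : (homog n f ('X - a%:P) ('X - c%:P))`_n = f.[1].
  rewrite coef_sum (horner_coef_wide _ sf); apply: eq_bigr => i _.
  by have := monicP (T_monic i); rewrite lead_coefE size_T coefZ expr1n => ->.
by rewrite ltnNge; apply: contra f1_neq0 => /(nth_default 0); rewrite coef_n => ->.
Qed.

Lemma size_homog_monic (R : idomainType) n (f A : {poly R}) c :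
  f \is monic -> size f = n.+1 -> A \is monic -> (2 < size A)%N ->
  size (homog n f A ('X - c%:P)) = (n * (size A).-1).+1.
Proof.
move=> f_monic sf A_monic sA; set a := (size A).-1.
have size_Ak k : size (A ^+ k) = (a * k).+1.
  by rewrite -size_exp prednK // size_poly_gt0 monic_neq0 ?monic_exp.
have fn : f`_n = 1 by have := monicP f_monic; rewrite lead_coefE sf.
rewrite /homog big_ord_recr /= subnn expr0 mulr1 fn scale1r addrC size_polyDl.
  by rewrite size_Ak mulnC.
rewrite size_Ak ltnS; apply: leq_trans (size_sum _ _ _) _; apply/bigmax_leqP => i _.
apply: leq_trans (size_scale_leq _ _) _; apply: leq_trans (size_polyMleq _ _) _.
rewrite size_Ak size_exp_XsubC; have := ltn_ord i; rewrite /= -/a.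
have : (2 <= a)%N by rewrite /a -ltnS prednK // (ltn_trans _ sA).
nia.
Qed.

Lemma dvdp_homog_sub (R : idomainType) n (f P1 P2 C : {poly R}) :
  P1 - P2 %| homog n f P1 C - homog n f P2 C.
Proof.
rewrite /homog -sumrB; apply: (big_ind (fun p => P1 - P2 %| p)) => [||i _].
- exact: dvdp0.
- exact: dvdp_add.
by rewrite -scalerBr -mulrBl subrXX -mulrA -mul_polyC dvdp_mull ?dvdp_mulr.
Qed.

Section HomogRoot.
Variables (F : finFieldType) (K : fieldType) (psi : {rmorphism {poly F} -> K}).
Variables (n : nat) (beta gamma : F) (f : {poly F}).
Hypotheses (bg : beta != - gamma) (sf : size f = n.+1).
Local Notation iota := (psi \o polyC).
Local Notation w := (psi 'X).
Local Notation P k := ('X^(#|F| ^ k) + beta%:P).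
Local Notation C := ('X - gamma%:P).

Let psiP k : psi (P k) = w ^+ (#|F| ^ k) + iota beta.
Proof. by rewrite rmorphD rmorphXn. Qed.

Let psiC : psi C = w - iota gamma.
Proof. by rewrite rmorphB. Qed.

Lemma homog_XsubC_neq0 k : psi (homog n f (P k) C) = 0 -> w != iota gamma.
Proof.
rewrite -subr_eq0 -psiC => /eqP; apply: contraTneq => C0.
have wE : w = iota gamma by apply/eqP; rewrite -subr_eq0 -psiC C0.
rewrite rmorph_homog_eq0 // psiP wE rmorph_expf_cardX -rmorphD.
rewrite mulf_eq0 expf_eq0 !fmorph_eq0 addrC addr_eq0 (negPf bg) andbF orbF.
by rewrite -[n]/(n.+1.-1) -sf -lead_coefE lead_coef_eq0 -size_poly_gt0 sf.
Qed.

Lemma homog_root k : psi (homog n f (P k) C) = 0 ->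
  exists2 y, root (map_poly iota f) y & w ^+ (#|F| ^ k) + iota beta = y * (w - iota gamma).
Proof.
move=> h0; have C_neq0 : psi C != 0 by rewrite psiC subr_eq0 (homog_XsubC_neq0 h0).
exists (psi (P k) / psi C); last by rewrite -psiC divfK // psiP.
move: h0; rewrite rmorph_homog ?sf // => /eqP.
by rewrite mulf_eq0 expf_eq0 (negPf C_neq0) andbF.
Qed.

Lemma homog_deriv_neq0 : primitive_poly f -> psi (homog n f (P n) C) = 0 ->
  psi (homog n f (P n) C)^`() != 0.
Proof.
move=> pf h0; have [y fy yE] := homog_root h0.
have C_neq0 : psi C != 0 by rewrite psiC subr_eq0 (homog_XsubC_neq0 h0).
have n_gt0 : (0 < n)%N by case: (primitive_mi pf) => -[]; rewrite sf ltnS.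
have dP : (P n)^`() = 0 by rewrite derivD deriv_XcardX // derivC addr0.
have := rmorph_deriv_homog (eq_leq sf) C_neq0 dP (derivXsubC _).
rewrite psiP psiC yE mulfK -?psiC //= (rootP fy) mul0rn sub0r mulrN => dE.
apply: contraTneq (primitive_poly_deriv_root_neq0 sf pf fy) => d0.
move: dE; rewrite d0 mulr0 => /esym/eqP.
rewrite oppr_eq0 !mulf_eq0 expf_eq0 (negPf C_neq0) andbF.
by rewrite (negPf (primitive_poly_root_neq0 sf pf fy)) => /= ->.
Qed.
End HomogRoot.

(** * Irreducible factors of Fnum / Fden *)

Section QuotientField.
Variables (F : finFieldType) (g : {poly F}) (hI : monic_irreducible_poly g).

Definition in_qfpoly : {poly F} -> {poly %/ g with hI} := in_qpoly g.
HB.instance Definition _ := GRing.RMorphism.copy in_qfpoly (in_qpoly g).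

Lemma in_qfpoly_eq0 p : (in_qfpoly p == 0) = (g %| p).
Proof.
have g_monic : g \is monic by case: hI.
apply/eqP/idP => [/val_eqP /= | g_dvd].
  by rewrite -Pdiv.IdomainMonic.modpE mk_monicE.
by apply/val_eqP; rewrite /= -Pdiv.IdomainMonic.modpE mk_monicE.
Qed.

End QuotientField.

Section Main.
Variables (F : finFieldType) (n : nat) (beta gamma : F) (f : {poly F}).
Hypotheses (bg : beta != - gamma) (sf : size f = n.+1) (pf : primitive_poly f).
Hypothesis Q_gt2 : (2 < #|F| ^ n)%N.
Local Notation q := #|F|.
Local Notation Q := (q ^ n)%N.
Local Notation Fnum := (Fnum n Q beta gamma f).
Local Notation Fden := (Fden n beta gamma f).
Local Notation C := ('X - gamma%:P).

Let n_gt0 : (0 < n)%N.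
Proof. by case: (primitive_mi pf) => -[]; rewrite sf ltnS. Qed.

Let FdenE : Fden = homog n f ('X^(q ^ 0) + beta%:P) C.
Proof. by rewrite expn0 expr1 Fden_homog ?sf. Qed.

Section Factor.
Variables (g : {poly F}) (hI : monic_irreducible_poly g).
Local Notation psi := (in_qfpoly hI).
Local Notation iota := (psi \o polyC).
Local Notation w := (psi 'X).

Let pchar_Q : [pchar {poly %/ g with hI}].-nat Q := pnat_pchar_cardX iota n.

Let root_dvdn_degree y : root (map_poly iota f) y -> (n %| (size g).-1)%N.
Proof. by move/(primitive_poly_dvdn_degree sf pf); apply; rewrite card_qfpoly. Qed.

Lemma Fden_factor_size : g %| Fden -> (n < size g)%N.
Proof.
rewrite -in_qfpoly_eq0 FdenE => /eqP /homog_root[] // y /root_dvdn_degree n_dvd _.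
have [[g_gt1 _] _] := hI; rewrite -(prednK (ltnW g_gt1)) ltnS dvdn_leq //.
by rewrite -ltnS prednK // ltnW.
Qed.

Lemma Fden_factor_dvdp_XQ : g %| Fden -> g %| 'X^Q - 'X.
Proof.
rewrite -in_qfpoly_eq0 FdenE => /eqP /homog_root[] // y fy.
rewrite expn0 expr1 => /(mobius_inv_unique (primitive_poly_root_neq1 sf pf fy Q_gt2)) wE.
rewrite -in_qfpoly_eq0 rmorphB rmorphXn wE mobius_inv_fixed ?subrr ?rmorph_expf_cardX //.
exact: primitive_poly_root_fixed sf pf fy.
Qed.

Lemma Fnum_factor_ndvdp_deriv : g %| Fnum -> ~~ (g %| Fnum^`()).
Proof. by rewrite -!in_qfpoly_eq0 => /eqP /(homog_deriv_neq0 bg sf pf). Qed.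

End Factor.

Lemma size_Fden : size Fden = n.+1.
Proof.
rewrite Fden_homog ?sf // -[beta]opprK polyCN size_homog_XsubC ?sf //.
exact: (primitive_poly_horner1_neq0 sf pf Q_gt2).
Qed.

Lemma size_Fnum : size Fnum = (n * Q).+1.
Proof.
have f_monic : f \is monic by case: (primitive_mi pf).
by rewrite size_homog_monic ?monicXnaddC ?size_XnaddC ?(ltn_trans _ Q_gt2) // ltnS ltnW.
Qed.

Lemma size_quotient : size (Fnum %/ Fden) = (n * (Q - 1)).+1.
Proof.
have Fden_neq0 : Fden != 0 by rewrite -size_poly_gt0 size_Fden.
rewrite size_divp // -[size (Defs.Fnum _ _ _ _ _)]/(size Fnum).
rewrite -[size (Defs.Fden _ _ _ _)]/(size Fden).
by rewrite size_Fnum size_Fden mulnBr muln1 subSn // leq_pmulr // (ltn_trans _ Q_gt2).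
Qed.

Lemma XQ_dvdp_Fnum_sub : 'X^Q - 'X %| Fnum - Fden.
Proof.
have := dvdp_homog_sub n f ('X^Q + beta%:P) ('X^(q ^ 0) + beta%:P) C.
by rewrite -FdenE expn0 expr1 opprD addrACA subrr addr0.
Qed.

Lemma Fden_dvdp_Fnum : Fden %| Fnum.
Proof.
have Fden_gt1 : (1 < size Fden)%N by rewrite size_Fden ltnS.
have [g g_irr g_dvd] := exists_monic_irredp_dvdp Fden_gt1.
have g_eqp : g %= Fden.
  have Fden_neq0 : Fden != 0 by rewrite -size_poly_gt0 ltnW.
  by rewrite -dvdp_size_eqp // eqn_leq (dvdp_leq _ g_dvd) // size_Fden Fden_factor_size.
rewrite -(subrK Fden Fnum) dvdp_add // -(eqp_dvdl _ g_eqp).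
exact: dvdp_trans (Fden_factor_dvdp_XQ g_irr g_dvd) XQ_dvdp_Fnum_sub.
Qed.

Section QuotientFactor.
Variables (g : {poly F}) (hI : monic_irreducible_poly g).
Hypothesis g_dvd : g %| Fnum %/ Fden.
Local Notation psi := (in_qfpoly hI).
Local Notation iota := (psi \o polyC).
Local Notation w := (psi 'X).

Let FnumE : Fnum %/ Fden * Fden = Fnum := divpK Fden_dvdp_Fnum.

Let g_dvd_Fnum : g %| Fnum.
Proof. by rewrite -FnumE dvdp_mulr. Qed.

Lemma quotient_factor_ndvdp_XQ : ~~ (g %| 'X^Q - 'X).
Proof.
apply/negP => g_dvd_XQ; have := Fnum_factor_ndvdp_deriv hI g_dvd_Fnum; apply/negP/negPn.
have g_dvd_Fden : g %| Fden.
  have -> : Fden = Fnum - (Fnum - Fden) by rewrite opprB addrC subrK.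
  exact/dvdp_sub/(dvdp_trans g_dvd_XQ XQ_dvdp_Fnum_sub).
by apply: sqr_dvdp_deriv; rewrite -FnumE dvdp_mul.
Qed.

Lemma quotient_factor_size : (n * (Q - 1) < size g)%N.
Proof.
have := g_dvd_Fnum; rewrite -(in_qfpoly_eq0 hI) => /eqP /homog_root[] // y fy wQE.
have y_neq1 := primitive_poly_root_neq1 sf pf fy Q_gt2.
have yQ := primitive_poly_root_fixed sf pf fy.
have pchar_Q : [pchar {poly %/ g with hI}].-nat Q := pnat_pchar_cardX iota n.
set x := mobius_inv (iota beta) (iota gamma) y.
have xQ : x ^+ Q = x by rewrite mobius_inv_fixed ?rmorph_expf_cardX.
set z := w - x.
have z_neq0 : z != 0.
  apply: contraNneq quotient_factor_ndvdp_XQ => z0.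
  have wx : w = x by apply/eqP; rewrite -subr_eq0 -/z z0.
  by rewrite -(in_qfpoly_eq0 hI) rmorphB rmorphXn /= wx xQ subrr.
have zQ : z ^+ Q = y * z.
  by rewrite exprBn_pchar // xQ; apply: mobius_inv_eigen.
have [g_gt1 _] := hI.1.
have /dvdnP[k kE] := primitive_poly_dvdn_degree sf pf fy (card_qfpoly hI).
have k_gt0 : (0 < k)%N.
  have : (0 < (size g).-1)%N by rewrite -subn1 subn_gt0.
  by rewrite kE muln_gt0 => /andP[].
have : y ^+ k * z = z.
  by rewrite -(expr_expn_eigen k yQ zQ) -expnM mulnC -kE -card_qfpoly expf_card.
rewrite -{2}[z]mul1r => /(mulIf z_neq0)/eqP.
rewrite -(prim_order_dvd (primitive_poly_prim_root sf pf fy)) => /(dvdn_leq k_gt0) Qk.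
have : (n * (Q - 1) <= k * n)%N by rewrite mulnC leq_mul2r Qk orbT.
by rewrite -kE; lia.
Qed.
End QuotientFactor.
End Main.

(* [f != 'X - 1] follows from primitivity and [2 < #|F| ^ n]. *)
Theorem mainTheorem10 (F : finFieldType) (n : nat) (beta gamma : F)
    (f : {poly F}) :
  (1 <= n)%N -> (2 < #|F| ^ n)%N -> beta != - gamma ->
  size f = n.+1 -> primitive_poly f -> f != 'X - 1 ->
  let Q := (#|F| ^ n)%N in
  Fden n beta gamma f %| Fnum n Q beta gamma f /\
  irreducible_poly (Fnum n Q beta gamma f %/ Fden n beta gamma f) /\
  size (Fnum n Q beta gamma f %/ Fden n beta gamma f) = (n * (Q - 1)).+1.
Proof.
move=> n_gt0 Q_gt2 bg sf pf _ Q.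
have size_G := size_quotient beta gamma sf pf Q_gt2.
split; first exact: Fden_dvdp_Fnum.
split=> //; apply: irredp_factor_size => [|g g_irr g_dvd]; rewrite size_G.
  by rewrite ltnS muln_gt0 n_gt0 subn_gt0 (ltn_trans _ Q_gt2).
exact: quotient_factor_size g_dvd.
Qed.
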